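(* Let $G$ be a unit square graph and let $C$ be a maximal clique of $G$. Then there are vertices $v_1,v_2,v_3,v_4\in V(G)$ (not necessarily distinct) such that $C=\bigcap_{i=1}^4 N[v_i]$.
   Context: A unit square graph is a graph $G$ admitting $f\colon V(G)\to\mathbb{R}^2$ with $vw\in E(G)$ iff $\|f(v)-f(w)\|_\infty\le1$ for distinct $v,w$. $N[v]$ denotes the closed neighborhood of $v$. *)

From Stdlib Require Import Reals.
From mathcomp Require Import all_boot.

Set Implicit Arguments.
Unset Strict Implicit.
Unset Printing Implicit Defensive.

Definition unit_square_graph (T : finType) (e : rel T) : Prop :=
  exists f : T -> (R * R),
    forall v w : T, v <> w ->
      (e v w <-> Rle (Rmax (Rabs (Rminus (fst (f v)) (fst (f w))))
                     (Rabs (Rminus (snd (f v)) (snd (f w))))) R1).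

Definition is_clique (T : finType) (e : rel T) (C : {set T}) : Prop :=
  forall x y, x \in C -> y \in C -> x != y -> e x y.

Definition maximal_clique (T : finType) (e : rel T) (C : {set T}) : Prop :=
  is_clique e C /\ forall D : {set T}, is_clique e D -> C \subset D -> D = C.

Definition closed_nbhd (T : finType) (e : rel T) (v : T) : {set T} :=
  [set w | (w == v) || e v w].

From Stdlib Require Import Reals Lra.
From mathcomp Require Import all_boot.

Set Implicit Arguments.
Unset Strict Implicit.
Unset Printing Implicit Defensive.

(* Take v1, v2 (resp. v3, v4) in C with least and greatest first (resp.
   second) coordinate.  A vertex w adjacent to all four lies within sup-distance
   1 of both ends of the range of each coordinate over C, hence within distance
   1 of every vertex of C; so C + w is a clique and maximality puts w in C.  The
   reverse inclusion holds because C is a clique. *)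

Section SupDistance.

Local Open Scope R_scope.

Definition dist_inf (p q : R * R) : R :=
  Rmax (Rabs (fst p - fst q)) (Rabs (snd p - snd q)).

Lemma dist_inf_le1 (p q : R * R) :
  dist_inf p q <= 1 <->
  (-1 <= fst p - fst q <= 1) /\ (-1 <= snd p - snd q <= 1).
Proof.
rewrite /dist_inf /Rmax /Rabs.
by repeat (destruct Rle_dec || destruct Rcase_abs); split; intros; lra.
Qed.

Lemma dist_inf_refl_le1 (p : R * R) : dist_inf p p <= 1.
Proof. by rewrite dist_inf_le1; lra. Qed.

Lemma dist_infC (p q : R * R) : dist_inf p q <= 1 -> dist_inf q p <= 1.
Proof. by rewrite !dist_inf_le1; lra. Qed.

(* The closed unit ball of the sup-norm is a box, so it contains every point
   whose coordinates are bracketed by those of points already in the ball. *)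
Lemma dist_inf_le1_bracketed (p q l r b t : R * R) :
  fst l <= fst p <= fst r -> snd b <= snd p <= snd t ->
  dist_inf l q <= 1 -> dist_inf r q <= 1 ->
  dist_inf b q <= 1 -> dist_inf t q <= 1 ->
  dist_inf p q <= 1.
Proof. by rewrite !dist_inf_le1; lra. Qed.

End SupDistance.

Section RealArgmin.

Local Open Scope R_scope.

Lemma exists_Rargmin_seq (X : eqType) (g : X -> R) (s : seq X) :
  s != [::] -> exists2 x, x \in s & forall y, y \in s -> g x <= g y.
Proof.
elim: s => [//|a [|b s] IH] _.
  by exists a => [|y]; rewrite ?inE // => /eqP ->; apply: Rle_refl.
have [x xs Hx] := IH isT.
have [ax|xa] := Rle_dec (g a) (g x).
  exists a => [|y]; first exact: mem_head.
  by rewrite inE => /predU1P [->|/Hx]; [apply: Rle_refl | lra].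
exists x => [|y]; first by rewrite inE xs orbT.
by rewrite inE => /predU1P [->|/Hx]; lra.
Qed.

Lemma exists_Rargmin (T : finType) (g : T -> R) (A : {set T}) :
  A != set0 -> exists2 x, x \in A & forall y, y \in A -> g x <= g y.
Proof.
move=> /set0Pn [a aA].
have [|x] := @exists_Rargmin_seq _ g (enum A).
  by apply/eqP => sA; have := mem_enum A a; rewrite sA aA.
by rewrite mem_enum => xA Hx; exists x => // y yA; apply: Hx; rewrite mem_enum.
Qed.

End RealArgmin.

Section MaximalClique.

Variables (T : finType) (e : rel T).

Lemma clique_sub_closed_nbhd (C : {set T}) v :
  is_clique e C -> v \in C -> C \subset closed_nbhd e v.
Proof.
move=> Ccl vC; apply/subsetP => w wC; rewrite inE.
by case: eqVneq => //= wv; apply: Ccl; rewrite // eq_sym.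
Qed.

Lemma maximal_clique_neq0 (C : {set T}) :
  0 < #|T| -> maximal_clique e C -> C != set0.
Proof.
move=> /card_gt0P [t _] [_ Cmax]; apply/eqP => C0.
have t_cl : is_clique e [set t].
  by move=> x y; rewrite !inE => /eqP -> /eqP ->; rewrite eqxx.
by have := set11 t; rewrite (Cmax _ t_cl); rewrite ?C0 ?sub0set ?inE.
Qed.

Lemma maximal_clique_adj_mem (C : {set T}) w :
  maximal_clique e C -> (forall u, u \in C -> u != w -> e u w && e w u) ->
  w \in C.
Proof.
move=> [Ccl Cmax] adj; have wC_cl : is_clique e (w |: C).
  move=> x y; rewrite !inE => /predU1P [->|xC] /predU1P [->|yC].
  - by rewrite eqxx.
  - by rewrite eq_sym => /(adj y yC) /andP [].
  - by move=> /(adj x xC) /andP [].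
  - exact: Ccl.
by rewrite -(Cmax _ wC_cl (subsetUr _ _)) setU11.
Qed.

End MaximalClique.

Theorem mainTheorem8 (T : finType) (e : rel T)
  (Hirr : irreflexive e) (Hne : 0 < #|T|)
  (HG : unit_square_graph e) (C : {set T}) (HC : maximal_clique e C) :
  exists v1 v2 v3 v4 : T,
    C = closed_nbhd e v1 :&: closed_nbhd e v2 :&: closed_nbhd e v3 :&: closed_nbhd e v4.
Proof.
have [f Hf] := HG; have Cn0 := maximal_clique_neq0 Hne HC.
have [v1 v1C H1] := exists_Rargmin (fun v => fst (f v)) Cn0.
have [v2 v2C H2] := exists_Rargmin (fun v => Ropp (fst (f v))) Cn0.
have [v3 v3C H3] := exists_Rargmin (fun v => snd (f v)) Cn0.
have [v4 v4C H4] := exists_Rargmin (fun v => Ropp (snd (f v))) Cn0.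
exists v1, v2, v3, v4; have Ccl := HC.1.
apply/eqP; rewrite eqEsubset !subsetI !clique_sub_closed_nbhd //=; apply/subsetP => w.
rewrite !inE -!andbA => /and4P [w1 w2 w3 w4].
have near_w v : (w == v) || e v w -> Rle (dist_inf (f v) (f w)) 1.
  case: eqVneq => [-> _|/eqP wv /= evw]; first exact: dist_inf_refl_le1.
  exact/(Hf v w (nesym wv)).
apply: (maximal_clique_adj_mem HC) => u uC uw.
have uw_near : Rle (dist_inf (f u) (f w)) 1.
  apply: (dist_inf_le1_bracketed (l := f v1) (r := f v2) (b := f v3) (t := f v4));
    try exact: near_w.
  - by have := H1 u uC; have := H2 u uC; lra.
  - by have := H3 u uC; have := H4 u uC; lra.
have uw' : u <> w := elimN eqP uw.
apply/andP; split; first exact/(Hf u w uw').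
exact/(Hf w u (nesym uw'))/dist_infC.
Qed.
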